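(* Let $P$ be a $d$-dimensional $k$-template and let $m\ge d$. Then there is an $m$-dimensional $k$-template $Q$ such that $e(Q)=e(P)$, $P=\{x\restriction d : x\in Q\}$, and for every infinite set $X$, $L(X^m,Q)$ is embeddable into $L(X^d,P)$.
   Context: Here $1\le d<\omega$, $2\le k<\omega$. A $d$-dimensional $k$-template is a set $P$ of $d$-tuples with $|P|=k$. If $P,Q$ are $d$-dimensional templates, $Q$ is a homomorphic image of $P$ if there is a surjection $f:P\to Q$ such that for all $x,y\in P$ and $i<d$, $x_i=y_i$ implies $f(x)_i=f(y)_i$. $L(X^d,P)$ is the $k$-hypergraph with vertex set $X^d$ whose edges are the $k$-templates $R\subseteq X^d$ that are homomorphic images of $P$. A set $I\subseteq\{0,\dots,d-1\}$ is a distinguisher for $P$ if for all distinct $x,y\in P$ there is $i\in I$ with $x_i\ne y_i$; $e(P)$ is the least cardinality of a distinguisher. $x\restriction d$ is the tuple of the first $d$ coordinates of $x$. A map $f:V_1\to V_2$ embeds a $k$-hypergraph $H_1=(V_1,E_1)$ into $H_2=(V_2,E_2)$ if it is an isomorphism of $H_1$ onto a subhypergraph of $H_2$ (a hypergraph $(V',E')$ with $V'\subseteq V_2$, $E'\subseteq E_2$). *)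

From mathcomp Require Import all_boot.
From mathcomp Require Import boolp classical_sets functions cardinality.
Set Implicit Arguments. Unset Strict Implicit. Unset Printing Implicit Defensive.
Local Open Scope classical_set_scope.
Local Open Scope card_scope.

Definition template (d k : nat) (P : set ('I_d -> nat)) : Prop := P #= `I_k.

Definition hom_image (d : nat) (A B : Type)
    (P : set ('I_d -> A)) (R : set ('I_d -> B)) : Prop :=
  exists f : ('I_d -> A) -> ('I_d -> B),
    [/\ (forall x, P x -> R (f x)),
        (forall y, R y -> exists2 x, P x & f x = y) &
        (forall x y, P x -> P y -> forall i : 'I_d, x i = y i -> f x i = f y i)].

(* Edge set of the k-hypergraph L(X^d, P) (vertex set: all of X^d). *)
Definition Ledges (X : Type) (d k : nat) (P : set ('I_d -> nat))
    : set (set ('I_d -> X)) :=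
  [set R | R #= `I_k /\ hom_image P R].

Definition distinguisher (d : nat) (A : Type) (P : set ('I_d -> A))
    (I : {set 'I_d}) : Prop :=
  forall x y, P x -> P y -> x <> y -> exists2 i, i \in I & x i <> y i.

(* least cardinality of a distinguisher (the full index set always is one) *)
Definition e (d : nat) (A : Type) (P : set ('I_d -> A)) : nat :=
  \big[minn/d]_(I : {set 'I_d} | `[< distinguisher P I >]) #|I|.

Definition restr (d m : nat) (hdm : (d <= m)%N) (A : Type) (x : 'I_m -> A)
    : 'I_d -> A :=
  fun i => x (widen_ord hdm i).

Definition embeds (V1 V2 : Type) (E1 : set (set V1)) (E2 : set (set V2)) : Prop :=
  exists f : V1 -> V2, exists V' : set V2, exists E' : set (set V2),
    [/\ set_bij [set: V1] V' f,
        E' `<=` E2,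
        (forall e', E' e' -> e' `<=` V') &
        (forall e1 : set V1, E1 e1 <-> E' (f @` e1))].

(* Q pads every tuple of P with copies of its first coordinate, so restricting
   to the first d coordinates recovers P and distinguishers of P and Q
   correspond.  To embed L(X^m,Q) into L(X^d,P), fix an injection
   E : X^m -> X and send x to the d-tuple whose i-th entry is E applied to x
   with the coordinates outside the i-th fibre of the padding overwritten.
   This map is injective, and since the coordinates of a fibre are equal on
   Q, every homomorphic image of Q is sent to a homomorphic image of P.
   The injection E exists because an infinite X carries an injective pairing
   X * X -> X: by Zorn's lemma take a maximal injective pairing on a subset
   A of X containing a countable one; if the complement of A embeds into A
   then so does X, and otherwise A embeds into its complement and the pairing
   extends to a larger set, contradicting maximality. *)

From mathcomp Require Import all_boot all_order.
From mathcomp Require Import boolp classical_sets functions cardinality.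
Set Implicit Arguments. Unset Strict Implicit. Unset Printing Implicit Defensive.
Import Order.TTheory.
Local Open Scope classical_set_scope.

Lemma set_inj_of_graph (T : Type) (A B : set T) (G : set (T * T)) :
    (forall a, A a -> exists b, G (a, b)) ->
    (forall a b, G (a, b) -> B b) ->
    (forall a a' b, G (a, b) -> G (a', b) -> a = a') ->
  exists2 f, set_fun A B f & set_inj A f.
Proof.
move=> Gtot GB Ginj.
have /choice[f Gf] : forall a, exists b, A a -> G (a, b).
  move=> a; have [/Gtot[b Gab]|nAa] := pselect (A a); first by exists b.
  by exists a.
exists f => [a /Gf/GB // | a a' /set_mem/Gf Ga /set_mem/Gf Ga' faa'].
by apply: Ginj Ga _; rewrite faa'.
Qed.

Lemma set_inj_total (T : Type) (A B : set T) :
  (exists2 f : T -> T, set_fun A B f & set_inj A f) \/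
  (exists2 g : T -> T, set_fun B A g & set_inj B g).
Proof.
pose compat (s t : T * T) := [/\ A s.1, B s.2 & s.1 = t.1 <-> s.2 = t.2].
have [G [Gcompat Gmax]] : exists G : set (T * T),
    (forall s t, G s -> G t -> compat s t) /\
    forall H, G `<` H -> ~ forall s t, H s -> H t -> compat s t.
  apply: Zorn_bigcup => F Fcompat Ftot s t [G FG Gs] [H FH Ht].
  have [GH|HG] := Ftot _ _ FG FH; first exact: Fcompat (GH _ Gs) Ht.
  exact: Fcompat Gs (HG _ Ht).
have [Gdom|] := pselect (forall a, A a -> exists b, G (a, b)).
  left; apply: set_inj_of_graph Gdom _ _ => [a b Gab | a a' b Gab Ga'b].
    by have [] := Gcompat _ _ Gab Gab.
  by have [_ _ ->] := Gcompat _ _ Gab Ga'b.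
move=> /existsNP[a0 /not_implyP[Aa0 /forallNP a0G]].
have [Gran|] := pselect (forall b, B b -> exists a, G (a, b)).
  right; apply: (@set_inj_of_graph _ _ _ [set p | G (p.2, p.1)]) Gran _ _.
  - by move=> b a /= Gab; have [] := Gcompat _ _ Gab Gab.
  - by move=> b b' a /= Gab Gab'; have [_ _ <-] := Gcompat _ _ Gab Gab'.
move=> /existsNP[b0 /not_implyP[Bb0 /forallNP Gb0]].
exfalso; apply: (Gmax (G `|` [set (a0, b0)])).
  split; first exact: subsetUl.
  by move=> /(_ (a0, b0)) Gab0; apply: (a0G b0); apply: Gab0; right.
have compat_new s : G s -> compat s (a0, b0) /\ compat (a0, b0) s.
  case: s => a b Gab; have [Aa Bb _] := Gcompat _ _ Gab Gab.
  split; split=> //=; split=> [eq|eq]; subst;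
    by [case: (a0G b) | case: (Gb0 a)].
move=> s t [Gs|->] [Gt|->]; [exact: Gcompat | exact: (compat_new _ Gs).1 |
  exact: (compat_new _ Gt).2 | by split].
Qed.

Section Pairing.
Variable X : Type.
Implicit Types (A B : set X) (G H M : set (X * X * X)).

(* A pairing is handled through its graph, a set of triples ((a, b), c)
   meaning that (a, b) is paired to c, so that unions of chains are again
   graphs. *)
Definition pairing_dom G : set X := [set a | exists c, G (a, a, c)].

Definition pairing_graph G :=
  let A := pairing_dom G in
  [/\ forall p c, G (p, c) -> [/\ A p.1, A p.2 & A c],
      forall a b, A a -> A b -> exists c, G (a, b, c),
      forall p c c', G (p, c) -> G (p, c') -> c = c' &
      forall p p' c, G (p, c) -> G (p', c) -> p = p'].

Lemma pairing_dom_sub G H : G `<=` H -> pairing_dom G `<=` pairing_dom H.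
Proof. by move=> GH a [c Gc]; exists c; apply: GH. Qed.

Lemma pairing_graph_pairwise G :
    (forall s t, G s -> G t ->
      exists2 H, pairing_graph H & [/\ H `<=` G, H s & H t]) ->
  pairing_graph G.
Proof.
move=> loc; split.
- move=> p c Gpc; have [H [Hdom _ _ _] [HG Hpc _]] := loc _ _ Gpc Gpc.
  by have [] := Hdom _ _ Hpc; split; apply: pairing_dom_sub HG _ _.
- move=> a b [c Gac] [c' Gbc'].
  have [H [_ Htot _ _] [HG Ha Hb]] := loc _ _ Gac Gbc'.
  have [c'' Hab] := Htot a b (ex_intro _ c Ha) (ex_intro _ c' Hb).
  by exists c''; apply: HG.
- move=> p c c' Gc Gc'; have [H [_ _ Hfun _] [_ Hc Hc']] := loc _ _ Gc Gc'.
  exact: Hfun Hc Hc'.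
- move=> p p' c Gp Gp'; have [H [_ _ _ Hinj] [_ Hp Hp']] := loc _ _ Gp Gp'.
  exact: Hinj Hp Hp'.
Qed.

Lemma pairing_graph_bigcup (I : Type) (D : set I) (G : I -> set (X * X * X)) :
    (forall i, D i -> pairing_graph (G i)) ->
    (forall i j, D i -> D j -> G i `<=` G j \/ G j `<=` G i) ->
  pairing_graph (\bigcup_(i in D) G i).
Proof.
move=> DG Dtot; apply: pairing_graph_pairwise => s t [i Di Gis] [j Dj Gjt].
have [Gij|Gji] := Dtot _ _ Di Dj.
  by exists (G j); [exact: DG | split=> //; [exact: bigcup_sup | exact: Gij]].
by exists (G i); [exact: DG | split=> //; [exact: bigcup_sup | exact: Gji]].
Qed.

Definition fun_graph A (f : X * X -> X) := [set (p, f p) | p in A `*` A].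

Lemma pairing_graph_fun A (f : X * X -> X) :
    set_fun (A `*` A) A f -> set_inj (A `*` A) f ->
  pairing_dom (fun_graph A f) = A /\ pairing_graph (fun_graph A f).
Proof.
move=> fA finj.
have domA : pairing_dom (fun_graph A f) = A.
  apply/seteqP; split=> [a [c [[b b'] [Ab _] [<- _ _]]] //| a Aa].
  by exists (f (a, a)), (a, a).
split=> //; rewrite /pairing_graph domA; split.
- by move=> _ _ [[a b] [Aa Ab] [<- <-]]; split=> //; apply: fA.
- by move=> a b Aa Ab; exists (f (a, b)), (a, b).
- by move=> _ _ _ [p Ap [<- <-]] [_ _ [-> <-]].
- move=> _ _ _ [p Ap [<- <-]] [p' Ap' [<- fpp']].
  by apply: finj; rewrite ?in_setE.
Qed.

Lemma fun_of_pairing_graph G : pairing_graph G ->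
  exists f : X * X -> X,
    [/\ set_fun (pairing_dom G `*` pairing_dom G) (pairing_dom G) f,
        set_inj (pairing_dom G `*` pairing_dom G) f &
        forall p c, G (p, c) -> f p = c].
Proof.
move=> [Gdom Gtot Gfun Ginj]; set A := pairing_dom G.
have /choice[f Gf] : forall p, exists c, (A `*` A) p -> G (p, c).
  move=> [a b]; have [[Aa Ab]|nAab] := pselect (A a /\ A b).
    by have [c Gc] := Gtot _ _ Aa Ab; exists c.
  by exists a.
exists f; split.
- by move=> p /Gf /Gdom[].
- by move=> p q /set_mem/Gf Gp /set_mem/Gf Gq fpq; apply: Ginj Gp _; rewrite fpq.
- by move=> p c Gc; have [Ap1 Ap2 _] := Gdom _ _ Gc; apply: Gfun (Gf p _) Gc.
Qed.

Lemma inj_setU_pairing A B (f : X * X -> X) (k : X -> X) (a0 a1 : X) :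
    set_fun (A `*` A) A f -> set_inj (A `*` A) f -> A a0 -> A a1 -> a0 <> a1 ->
    set_fun B A k -> set_inj B k ->
  exists2 j, set_fun (A `|` B) A j & set_inj (A `|` B) j.
Proof.
move=> fA finj Aa0 Aa1 a01 kA kinj.
have notA_B x : (A `|` B) x -> x \notin A -> B x.
  by case=> // Ax /negP; rewrite in_setE.
have AA a b : A a -> A b -> (a, b) \in A `*` A by rewrite in_setE.
pose j x := if x \in A then f (x, a0) else f (k x, a1).
exists j => [x ABx | x y /set_mem ABx /set_mem ABy]; rewrite /j.
  by case: ifPn => [/set_mem Ax | /(notA_B _ ABx) /kA kx]; apply: fA.
case: ifPn => [/set_mem Ax | /(notA_B _ ABx) Bx];
  case: ifPn => [/set_mem Ay | /(notA_B _ ABy) By].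
- by move/finj => /(_ (AA _ _ Ax Aa0) (AA _ _ Ay Aa0)) [].
- by move/finj => /(_ (AA _ _ Ax Aa0) (AA _ _ (kA _ By) Aa1)) [_ /a01].
- by move/finj => /(_ (AA _ _ (kA _ Bx) Aa1) (AA _ _ Ay Aa0)) [_ /esym /a01].
move/finj => /(_ (AA _ _ (kA _ Bx) Aa1) (AA _ _ (kA _ By) Aa1)) [].
by apply: kinj; rewrite in_setE.
Qed.

Lemma pairing_graph_extend M (a0 a1 : X) (h : X -> X) : pairing_graph M ->
    pairing_dom M a0 -> pairing_dom M a1 -> a0 <> a1 ->
    set_fun (pairing_dom M) (~` pairing_dom M) h -> set_inj (pairing_dom M) h ->
  exists2 H, pairing_graph H & M `<` H.
Proof.
move=> Mp Aa0 Aa1 a01 hA hinj; set A := pairing_dom M in Aa0 Aa1 hA hinj *.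
have [f [fA finj Mf]] := fun_of_pairing_graph Mp.
pose k := 'pinv_ id A h.
have hK a : A a -> k (h a) = a.
  by move=> Aa; have := pinvKV id hinj (mem_set Aa).
have kA : set_fun (h @` A) A k by move=> _ [a Aa <-]; rewrite hK.
have kinj : set_inj (h @` A) k.
  by move=> _ _ /set_mem[a Aa <-] /set_mem[b Ab <-]; rewrite !hK // => ->.
have [j jA jinj] := inj_setU_pairing fA finj Aa0 Aa1 a01 kA kinj.
pose A' := A `|` h @` A.
(* New pairs are coded in A through j and f, then moved off A by h, so they
   cannot collide with the old values, which lie in A. *)
pose g p := if p \in A `*` A then f p else h (f (j p.1, j p.2)).
have jjA p : (A' `*` A') p -> (A `*` A) (j p.1, j p.2).
  by case=> Ap1 Ap2; split; apply: jA.
have gA' : set_fun (A' `*` A') A' g.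
  move=> p A'p; rewrite /g; case: ifPn => [/set_mem/fA|_]; first by left.
  by right; exists (f (j p.1, j p.2)) => //; apply/fA/jjA.
have ginj : set_inj (A' `*` A') g.
  move=> p q /set_mem A'p /set_mem A'q; rewrite /g.
  have hf r : (A' `*` A') r -> ~ A (h (f (j r.1, j r.2))).
    by move=> A'r; apply/hA/fA/jjA.
  case: ifPn => [Ap | _]; case: ifPn => [Aq | _].
  - exact: finj.
  - by move=> fpq; have := fA _ (set_mem Ap); rewrite fpq => /(hf _ A'q).
  - by move=> fpq; have := fA _ (set_mem Aq); rewrite -fpq => /(hf _ A'p).
  move=> hpq; have fpq : f (j p.1, j p.2) = f (j q.1, j q.2).
    by apply: hinj hpq; rewrite in_setE; apply/fA/jjA.
  have [] : (j p.1, j p.2) = (j q.1, j q.2).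
    by apply: finj fpq; rewrite in_setE; apply: jjA.
  case: p q A'p A'q {hpq fpq} => [x y] [x' y'] [A'x A'y] [A'x' A'y'] /= jx jy.
  have -> : x = x' by apply: jinj jx; rewrite in_setE.
  by have -> : y = y' by apply: jinj jy; rewrite in_setE.
have [domH Hp] := pairing_graph_fun gA' ginj.
exists (fun_graph A' g) => //; split.
  move=> [p c] Mpc; have [Mdom _ _ _] := Mp; have [Ap1 Ap2 _] := Mdom _ _ Mpc.
  by exists p; [split; left | rewrite /g ifT ?in_setE // (Mf _ _ Mpc)].
move=> /pairing_dom_sub; rewrite domH => /(_ (h a0)) hA0.
by apply: (hA a0) => //; apply: hA0; right; exists a0.
Qed.

Lemma pairing_graph_maximal G0 : pairing_graph G0 ->
  exists M, [/\ pairing_graph M, G0 `<=` M &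
                forall H, pairing_graph H -> ~ M `<` H].
Proof.
move=> G0p.
(* Zorn is applied to the sets G such that G0 `|` G is a pairing graph: the
   union of the empty chain is then admissible as well. *)
have [G [PG Gmax]] : exists G, pairing_graph (G0 `|` G) /\
    forall K, G `<` K -> ~ pairing_graph (G0 `|` K).
  apply: Zorn_bigcup => F FP Ftot.
  have -> : G0 `|` \bigcup_(G in F) G =
            \bigcup_(G in F `|` [set set0]) (G0 `|` G).
    apply/seteqP; split=> [t [G0t|[G FG Gt]] | t [G [FG|->] [G0t|Gt]]] //.
    - by exists set0; [right|left].
    - by exists G; [left|right].
    - by left.
    - by right; exists G.
    - by left.
  apply: pairing_graph_bigcup => [G [/FP //|->]|G H]; first by rewrite setU0.
  move=> [FG|->] [FH|->]; last 3 first.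
  - by right; apply: setUS.
  - by left; apply: setUS.
  - by left.
  by have [GH|HG] := Ftot _ _ FG FH; [left|right]; apply: setUS.
exists (G0 `|` G); split=> // H Hp [GH HG]; apply: (Gmax H).
  split=> [t Gt|HsubG]; first by apply: GH; right.
  by apply: HG => t /HsubG Gt; right.
by rewrite setUidr //; apply: subset_trans GH; exact: subsetUl.
Qed.

Lemma infinite_nat_inj :
  infinite_set [set: X] -> exists en : nat -> X, injective en.
Proof.
move=> /infiniteP /card_leP [f].
exists (fun n => val (f (exist _ n (mem_set I)))) => m n /val_inj fmn.
have := @inj _ _ _ f (exist _ m (mem_set I)) (exist _ n (mem_set I)).
by move=> /(_ (mem_set I) (mem_set I) fmn) [].
Qed.

Lemma infinite_pairing :
  infinite_set [set: X] -> exists f : X * X -> X, injective f.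
Proof.
move=> /infinite_nat_inj[en en_inj].
pose ei := 'pinv_ (fun=> 0%N) [set: nat] en.
have enK n : ei (en n) = n by apply: pinvKV (mem_set I) => m n' _ _ /en_inj.
pose f0 p := en (pickle (ei p.1, ei p.2)).
have [G0dom G0p] : pairing_dom (fun_graph (range en) f0) = range en /\
    pairing_graph (fun_graph (range en) f0).
  apply: pairing_graph_fun => [p _|]; first by exists (pickle (ei p.1, ei p.2)).
  move=> [_ _] [_ _] /set_mem[/= [m _ <-] [n _ <-]]
    /set_mem[/= [m' _ <-] [n' _ <-]].
  by rewrite /f0 /= !enK => /en_inj/(pcan_inj pickleK)[-> ->].
have [M [Mp G0M Mmax]] := pairing_graph_maximal G0p.
set A := pairing_dom M.
have en_dom n : A (en n).
  by apply: (pairing_dom_sub G0M); rewrite G0dom; exists n.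
have en01 : en 0%N <> en 1%N by move/en_inj.
have [[h hA hinj]|[h hA hinj]] := set_inj_total A (~` A).
  have [H Hp MH] :=
    pairing_graph_extend Mp (en_dom 0%N) (en_dom 1%N) en01 hA hinj.
  by case: (Mmax H).
have [f [fA finj _]] := fun_of_pairing_graph Mp.
have [j jA jinj] :=
  inj_setU_pairing fA finj (en_dom 0%N) (en_dom 1%N) en01 hA hinj.
rewrite setUv in jA jinj.
have {}jinj : injective j by move=> u v; apply: jinj; apply: in_setT.
exists (fun p => f (j p.1, j p.2)) => -[x y] [x' y'] /= /finj.
rewrite !in_setE => /(_ (conj (jA x I) (jA y I)) (conj (jA x' I) (jA y' I))).
by case=> /jinj -> /jinj ->.
Qed.

End Pairing.

Lemma pow_inj_of_pairing (X : Type) (x0 : X) (f : X * X -> X) : injective f ->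
  forall n, exists E : ('I_n -> X) -> X, injective E.
Proof.
move=> finj; elim=> [|n [E Einj]].
  by exists (fun=> x0) => u v _; apply/funext => -[].
exists (fun u => f (u ord0, E (fun i => u (lift ord0 i)))).
move=> u v /finj[u0 /Einj uv]; apply/funext => i.
by case: (unliftP ord0 i) => [j ->|->] //; exact: (congr1 (fun w => w j) uv).
Qed.

Lemma distinguisher_setT (n : nat) (A : Type) (S : set ('I_n -> A)) :
  distinguisher S [set: 'I_n]%SET.
Proof.
move=> x y _ _ xy; have /existsNP[i xyi] : ~ forall i, x i = y i by move/funext.
by exists i; rewrite ?inE.
Qed.

Lemma e_le (n : nat) (A : Type) (S : set ('I_n -> A)) (I : {set 'I_n}) :
  distinguisher S I -> (e S <= #|I|)%N.
Proof.
move=> SI; rewrite /e -minEnat.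
exact: (bigmin_le_cond n (fun I : {set 'I_n} => #|I|) (asboolT SI)).
Qed.

Lemma e_witness (n : nat) (A : Type) (S : set ('I_n -> A)) :
  exists2 I : {set 'I_n}, distinguisher S I & e S = #|I|.
Proof.
rewrite /e -minEnat.
have [||I /asboolP SI ->] := @eq_bigmin _ _ _ n [set: 'I_n]%SET
  (fun I => `[< distinguisher S I >]) (fun I => #|I|).
- exact/asboolP/distinguisher_setT.
- by move=> I _; rewrite leEnat -[X in (_ <= X)%N]card_ord max_card.
by exists I.
Qed.

Lemma embeds_inj (V1 V2 : Type) (E1 : set (set V1)) (E2 : set (set V2))
    (f : V1 -> V2) :
  injective f -> (forall r, E1 r -> E2 (f @` r)) -> embeds E1 E2.
Proof.
move=> finj fE; exists f, (range f), [set f @` r | r in E1]; split.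
- by split=> [x _|x y _ _ /finj|_ [x _ <-]]; [exists x | | exists x].
- by move=> _ [r /fE Er <-].
- by move=> _ [r _ <-] _ [x _ <-]; exists x.
move=> r; split=> [Er|[r' Er' fr'r]]; first by exists r.
suff <- : r' = r by [].
apply/seteqP; split=> x.
  by rewrite -(image_inj (A := r') finj) fr'r image_inj.
by rewrite -(image_inj (A := r) finj) -fr'r image_inj.
Qed.

Section Pullback.
Variables (d m : nat) (c : 'I_m -> 'I_d) (s : 'I_d -> 'I_m).
Hypothesis sK : cancel s c.

Definition pull (A : Type) (x : 'I_d -> A) : 'I_m -> A := x \o c.

Lemma pullK (A : Type) : cancel (@pull A) (fun y => y \o s).
Proof. by move=> x; apply/funext => i /=; rewrite /pull /= sK. Qed.

Lemma pull_inj (A : Type) : injective (@pull A).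
Proof. exact: can_inj (@pullK A). Qed.

Lemma e_pull (A : Type) (P : set ('I_d -> A)) : e [set pull x | x in P] = e P.
Proof.
apply/eqP; rewrite eqn_leq; apply/andP; split.
  have [I PI ->] := e_witness P.
  rewrite -(card_imset I (can_inj sK)); apply: e_le.
  move=> _ _ [a Pa <-] [b Pb <-] ab.
  have [i Ii abi] := PI a b Pa Pb (fun eab => ab (congr1 _ eab)).
  by exists (s i); [apply/imsetP; exists i | rewrite /pull /= sK].
have [J QJ ->] := e_witness [set pull x | x in P].
apply: leq_trans (leq_imset_card c J); apply: e_le => a b Pa Pb ab.
have [j Jj abj] := QJ (pull a) (pull b) (ex_intro2 _ _ a Pa erefl)
  (ex_intro2 _ _ b Pb erefl) (fun eab => ab (pull_inj eab)).
by exists (c j); [apply/imsetP; exists j|].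
Qed.

Section Pack.
Variables (X : Type) (E : ('I_m -> X) -> X).
Hypothesis E_inj : injective E.

Definition pack (x : 'I_m -> X) : 'I_d -> X :=
  fun i => E (fun j => if c j == i then x j else x (s i)).

Lemma pack_inj : injective pack.
Proof.
move=> x y xy; apply/funext => j.
have /E_inj/(congr1 (fun z => z j)) := congr1 (fun z => z (c j)) xy.
by rewrite eqxx.
Qed.

Lemma pack_fiber (x y : 'I_m -> X) (i : 'I_d) :
  (forall j, c j = i -> x j = y j) -> pack x i = pack y i.
Proof.
move=> xy; congr E; apply/funext => j.
by case: eqP => [/xy //|_]; apply: xy; rewrite sK.
Qed.

Lemma hom_image_pack (P : set ('I_d -> nat)) (R : set ('I_m -> X)) :
  hom_image [set pull x | x in P] R -> hom_image P [set pack x | x in R].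
Proof.
move=> [g [gR g_onto gcoord]].
exists (fun x => pack (g (pull x))); split.
- by move=> x Px; exists (g (pull x)) => //; apply: gR; exists x.
- by move=> _ [y /g_onto [_ [x Px <-] <-] <-]; exists x.
move=> a b Pa Pb i abi; apply: pack_fiber => j cj.
by apply: gcoord; [exists a|exists b|rewrite /pull /= cj].
Qed.

Lemma embeds_pull (k : nat) (P : set ('I_d -> nat)) :
  embeds (@Ledges X m k [set pull x | x in P]) (@Ledges X d k P).
Proof.
apply: embeds_inj pack_inj _ => R [Rk RP]; split; last exact: hom_image_pack.
by apply: card_eq_trans Rk; apply: inj_card_eq => x y _ _ /pack_inj.
Qed.

End Pack.
End Pullback.

Definition clip (d m : nat) (hd : (0 < d)%N) (j : 'I_m) : 'I_d :=
  insubd (Ordinal hd) j.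

Lemma clip_widen (d m : nat) (hd : (0 < d)%N) (hdm : (d <= m)%N) :
  cancel (widen_ord hdm) (@clip d m hd).
Proof.
by move=> i; apply/val_inj; rewrite /clip insubdK //; exact: (ltn_ord i).
Qed.

Theorem lemma1p10 (d k m : nat) (hd : (1 <= d)%N) (hk : (2 <= k)%N)
    (hdm : (d <= m)%N) (P : set ('I_d -> nat)) :
  template k P ->
  exists Q : set ('I_m -> nat),
    [/\ template k Q,
        e Q = e P,
        P = [set restr hdm x | x in Q] &
        forall X : Type, infinite_set [set: X] ->
          embeds (@Ledges X m k Q) (@Ledges X d k P)].
Proof.
move=> tP; have cK := clip_widen hd hdm.
exists [set pull (@clip d m hd) x | x in P]; split.
- by apply: card_eq_trans tP; apply: inj_card_eq => x y _ _ /(pull_inj cK).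
- exact: e_pull.
- rewrite image_comp (_ : _ \o _ = id) ?image_id //.
  by apply/funext => x; exact: pullK.
move=> X Xinf; have [x0 _] := infinite_setN0 Xinf.
have [f finj] := infinite_pairing Xinf.
have [E Einj] := pow_inj_of_pairing x0 finj m.
exact: (embeds_pull cK Einj).
Qed.
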